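(* Let $0 \le q < p < 1$ and $s \in [0,1]$, and set $\alpha := p - q$ and $\rho := q/(1-\alpha)$. Consider the minimal random walk model: $\{X_i\}_{i\ge1}$ are $\{0,1\}$-valued with $P(X_1=1) = s$, and for each $n\ge1$, with $U_n$ uniform on $\{1,\dots,n\}$ (independent of everything else), if $X_{U_n}=1$ then $X_{n+1}=1$ with probability $p$ and $0$ otherwise, while if $X_{U_n}=0$ then $X_{n+1}=1$ with probability $q$ and $0$ otherwise. Let $H_n := \sum_{i=1}^n X_i$, and let $E_{p,q,s}$, $V_{p,q,s}$ denote expectation and variance for this model. Let $T_n$ be the random recursive tree on vertices $\{1,\dots,n\}$ (vertex $1$ alone initially; for $i=2,\dots,n$, vertex $i$ is joined to a uniformly chosen vertex among $\{1,\dots,i-1\}$), and perform Bernoulli bond percolation on $T_n$ in which each edge is retained independently with probability $\alpha$ and removed otherwise; denote expectation for this model by $E_\alpha$. Let $\mathcal{C}_{1,n}$ be the cluster containing vertex $1$, and let $\mathcal{C}_{1,n},\mathcal{C}_{2,n},\dots,\mathcal{C}_{n,n}$ be an enumeration of the clusters (setting $\mathcal{C}_{j,n} = \emptyset$ when $j$ exceeds the number of clusters). Then $$E_{p,q,s}[H_n] = \rho n + (s-\rho)\, E_\alpha[\#\mathcal{C}_{1,n}],$$ and $$V_{p,q,s}[H_n] = \rho(1-\rho)\sum_{j=1}^n E_\alpha[(\#\mathcal{C}_{j,n})^2] + (1-2\rho)(s-\rho)\, E_\alpha[(\#\mathcal{C}_{1,n})^2] - (s-\rho)^2\, (E_\a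lpha[\#\mathcal{C}_{1,n}])^2.$$
   Context: $\#\mathcal{C}$ denotes the number of vertices of a cluster $\mathcal{C}$. The enumeration of clusters other than $\mathcal{C}_{1,n}$ is arbitrary (e.g. by smallest vertex label); the formulas only involve $\mathcal{C}_{1,n}$ and sums over all clusters. *)

From HB Require Import structures.
From mathcomp Require Import all_boot all_order all_algebra.
Set Implicit Arguments. Unset Strict Implicit. Unset Printing Implicit Defensive.
Import Order.TTheory GRing.Theory Num.Theory.
Local Open Scope ring_scope.

(* Vertices / time indices 1..n are represented by 'I_n, i.e. 0..n-1
   (index k stands for k+1). *)

(* P(X_{k+1} = b | X_{U_k} = a) *)
Definition mrw_trans (R : realFieldType) (p q : R) (a b : bool) : R :=
  if b then (if a then p else q) else (if a then 1 - p else 1 - q).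

(* Joint law of (X_1,...,X_n): X_1 ~ Bernoulli(s); given X_1..X_k, U_k is
   uniform on {1..k} and X_{k+1} is drawn from mrw_trans (X_{U_k}) .
   (0-indexed: factor for index k>0 averages over u < k.) *)
Definition mrw_weight (R : realFieldType) (p q s : R) (n : nat)
    (x : {ffun 'I_n -> bool}) : R :=
  \prod_(k : 'I_n)
    (if val k == 0%N then (if x k then s else 1 - s)
     else (val k)%:R^-1 * \sum_(u : 'I_n | (val u < val k)%N) mrw_trans p q (x u) (x k)).

Definition mrw_E (R : realFieldType) (p q s : R) (n : nat)
    (f : {ffun 'I_n -> bool} -> R) : R :=
  \sum_(x : {ffun 'I_n -> bool}) mrw_weight p q s x * f x.

Definition mrw_V (R : realFieldType) (p q s : R) (n : nat)
    (f : {ffun 'I_n -> bool} -> R) : R :=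
  mrw_E p q s (fun x => f x ^+ 2) - (mrw_E p q s f) ^+ 2.

Definition H (R : realFieldType) (n : nat) (x : {ffun 'I_n -> bool}) : R :=
  \sum_(i : 'I_n) (if x i then 1 else 0).

(* configuration: parent function and edge-retention bits; vertex i>0 is
   joined to par i (< i), the edge {i, par i} being retained iff b i. *)
Definition rrt_conf (n : nat) : finType :=
  ({ffun 'I_n -> 'I_n} * {ffun 'I_n -> bool})%type.

(* law: par i uniform on {0..i-1}, b i Bernoulli(alpha), all independent;
   for the root we fix par 0 = 0, b 0 = false (dummy values). *)
Definition rrt_weight (R : realFieldType) (alpha : R) (n : nat)
    (c : rrt_conf n) : R :=
  \prod_(i : 'I_n)
    (if val i == 0%N then (if (c.1 i == i) && ~~ c.2 i then 1 else 0)
     else (if (val (c.1 i) < val i)%N then (val i)%:R^-1 else 0)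
          * (if c.2 i then alpha else 1 - alpha)).

Definition perc_E (R : realFieldType) (alpha : R) (n : nat)
    (f : rrt_conf n -> R) : R :=
  \sum_(c : rrt_conf n) rrt_weight alpha c * f c.

Definition open_edge (n : nat) (c : rrt_conf n) : rel 'I_n :=
  fun i j => (c.2 i && (c.1 i == j)) || (c.2 j && (c.1 j == i)).

Definition cluster (n : nat) (c : rrt_conf n) (v : 'I_n) : {set 'I_n} :=
  [set w | connect (open_edge c) v w].

Definition clusters (n : nat) (c : rrt_conf n) : {set {set 'I_n}} :=
  [set cluster c v | v : 'I_n].

Definition root_cluster_size (R : realFieldType) (n : nat) (c : rrt_conf n) : R :=
  #|[set w : 'I_n | [exists v : 'I_n, (val v == 0%N) && connect (open_edge c) v w]]|%:R.

(* sum over all clusters C of (#C)^2 ; equals sum_{j=1}^n (#C_{j,n})^2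
   since padded empty clusters contribute 0 *)
Definition sum_sq_clusters (R : realFieldType) (n : nat) (c : rrt_conf n) : R :=
  \sum_(C in clusters c) (#|C|%:R) ^+ 2.

From HB Require Import structures.
From mathcomp Require Import all_boot all_order all_algebra.
From mathcomp Require Import ring lra.
Import Order.TTheory GRing.Theory Num.Theory.
Set Implicit Arguments. Unset Strict Implicit. Unset Printing Implicit Defensive.
Local Open Scope ring_scope.

(* Since p = alpha + (1 - alpha) rho
   and q = (1 - alpha) rho, step n + 1 of the walk can be generated by drawing U_n,
   then copying X_(U_n) with probability alpha and otherwise drawing a fresh
   Bernoulli(rho) value. Retaining the edge {n + 1, U_n} of the random recursive tree
   exactly when a copy happens is Bernoulli(alpha) bond percolation, and every X_i
   equals the fresh value Z_r drawn at the root r (least vertex) of its cluster, where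
   Z_1 ~ Bernoulli(s), Z_r ~ Bernoulli(rho) for r > 1, all independent of the
   percolation. Given the clusters, H_n = sum_C #C Z_(root C); its conditional mean
   rho n + (s - rho) #C_1 and second moment, averaged over the percolation, give both
   formulas. *)

Section BernoulliField.
Variables (R : comPzRingType) (I : finType) (P : I -> R).

Definition bernoulli_weight (z : {ffun I -> bool}) : R :=
  \prod_i (if z i then P i else 1 - P i).

Lemma bernoulli_weight_prod (g : I -> bool -> R) :
  \sum_z bernoulli_weight z * \prod_i g i (z i)
  = \prod_i (P i * g i true + (1 - P i) * g i false).
Proof.
transitivity (\prod_i \sum_b (if b then P i else 1 - P i) * g i b).
  by rewrite bigA_distr_bigA; apply: eq_bigr => z _; rewrite -big_split.
by apply: eq_bigr => i _; rewrite big_bool addrC.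
Qed.

Lemma bernoulli_weight_mean_prod (A : {pred I}) :
  \sum_z bernoulli_weight z * \prod_(i in A) (z i)%:R = \prod_(i in A) P i.
Proof.
under [LHS]eq_bigr do rewrite big_mkcond /=.
rewrite (bernoulli_weight_prod (fun i b => if i \in A then b%:R else 1)).
rewrite [RHS]big_mkcond; apply: eq_bigr => i _.
by case: (i \in A); rewrite /= ?mulr1 ?mulr0 ?addr0 // addrC subrK.
Qed.

Lemma bernoulli_weight_mean j : \sum_z bernoulli_weight z * (z j)%:R = P j.
Proof.
have := bernoulli_weight_mean_prod (pred1 j); rewrite (big_pred1 j) // => <-.
by apply: eq_bigr => z _; rewrite (big_pred1 j).
Qed.

Lemma bernoulli_weight_mean_pair j k :
  \sum_z bernoulli_weight z * ((z j)%:R * (z k)%:R)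
  = P j * P k + (j == k)%:R * (P j - P j ^+ 2).
Proof.
case: eqVneq => [<-|jk].
  have -> : P j * P j + 1 * (P j - P j ^+ 2) = P j by ring.
  rewrite -bernoulli_weight_mean.
  by apply: eq_bigr => z _; case: (z j); rewrite ?mulr1 ?mulr0.
rewrite mul0r addr0.
have pair (F : I -> R) : \prod_(i in pred2 j k) F i = F j * F k.
  rewrite (bigD1 j) ?inE ?eqxx //= (big_pred1 k) // => i.
  by rewrite !inE; case: (eqVneq i j) => [->|]; rewrite ?andbF ?(negbTE jk) ?andbT.
rewrite -pair -bernoulli_weight_mean_prod.
by under [RHS]eq_bigr do rewrite pair.
Qed.

End BernoulliField.

Lemma prodr_natb (R : comPzSemiRingType) (I : finType) (B : pred I) :
  \prod_i ((B i)%:R : R) = [forall i, B i]%:R.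
Proof.
have [allB|/forallPn[i nBi]] := boolP [forall i, B i].
  by apply: big1 => i _; rewrite (forallP allB i).
by rewrite (bigD1 i) //= (negbTE nBi) mul0r.
Qed.

Lemma sum_sq_connect_classes (R : pzSemiRingType) (T : finType) (e : rel T) :
  connect_sym e ->
  \sum_(C in [set [set w | connect e v w] | v : T]) (#|C|%:R : R) ^+ 2
  = \sum_v \sum_w (connect e v w)%:R.
Proof.
move=> esym; set cls := fun v => [set w | connect e v w].
transitivity (\sum_v (#|cls v|%:R : R)).
  rewrite (partition_big cls (mem [set cls v | v : T])); last first.
    by move=> v _; apply: imset_f.
  apply: eq_bigr => _ /imsetP[w _ ->].
  rewrite (eq_bigr (fun _ => #|cls w|%:R)) => [|v /andP[_ /eqP -> //]].
  rewrite (eq_bigl (fun v => v \in cls w)) => [|v]; last first.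
    rewrite /= inE; apply/eqP/idP => [vw|wv].
      have : v \in cls v by rewrite inE connect0.
      by rewrite vw inE.
    by apply/setP => u; rewrite !inE (same_connect esym wv).
  by rewrite sumr_const expr2 mulr_natr.
apply: eq_bigr => v _.
rewrite -sum1_card natr_sum big_mkcond; apply: eq_bigr => w _.
by rewrite inE; case: connect.
Qed.

(* The guard [c.1 v < v] makes every step descend even in configurations of weight
   zero, so [v.+1] steps always reach the root. *)
Fixpoint root_fuel (n : nat) (c : rrt_conf n) (fuel : nat) (v : 'I_n) : 'I_n :=
  if fuel is fuel'.+1 then
    if c.2 v && (c.1 v < v)%N then root_fuel c fuel' (c.1 v) else v
  else v.

Definition cluster_root (n : nat) (c : rrt_conf n) (v : 'I_n) : 'I_n :=
  root_fuel c (val v).+1 v.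

Definition descending (n : nat) (c : rrt_conf n) : Prop :=
  forall k, c.2 k -> (c.1 k < k)%N.

Section ClusterRoot.
Variables (n : nat) (c : rrt_conf n).
Implicit Types v w : 'I_n.

Lemma root_fuel_enough f1 f2 v :
  (v < f1)%N -> (v < f2)%N -> root_fuel c f1 v = root_fuel c f2 v.
Proof.
elim: f1 f2 v => [|f1 IH] [|f2] v //= lt1 lt2.
by case: ifP => // /andP[_ lt]; apply: IH; apply: leq_trans lt _.
Qed.

Lemma cluster_rootE v :
  cluster_root c v = if c.2 v && (c.1 v < v)%N then cluster_root c (c.1 v) else v.
Proof.
rewrite [LHS]/cluster_root [LHS]/=; case: ifP => // /andP[_ lt].
by apply: root_fuel_enough.
Qed.

Lemma cluster_root0 v : val v = 0%N -> cluster_root c v = v.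
Proof. by move=> v0; rewrite cluster_rootE v0 ltn0 andbF. Qed.

Lemma open_edge_connect_sym : connect_sym (open_edge c).
Proof. by apply: sym_connect_sym => v w; rewrite /open_edge orbC. Qed.

Lemma connect_cluster_root v : connect (open_edge c) v (cluster_root c v).
Proof.
rewrite /cluster_root; move: (val v).+1 => f.
elim: f v => [|f IH] v /=; first exact: connect0.
case: ifP => [/andP[retained _]|_]; last exact: connect0.
by apply: connect_trans (IH _); apply: connect1; rewrite /open_edge retained eqxx.
Qed.

Hypothesis c_desc : descending c.

Lemma cluster_root_step v :
  cluster_root c v = if c.2 v then cluster_root c (c.1 v) else v.
Proof. by rewrite cluster_rootE; have := @c_desc v; case: (c.2 v) => // /(_ isT) ->. Qed.

Lemma open_edge_cluster_root v w :
  open_edge c v w -> cluster_root c v = cluster_root c w.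
Proof.
case/orP=> /andP[retained /eqP <-].
  by rewrite [in LHS]cluster_root_step retained.
by rewrite [in RHS]cluster_root_step retained.
Qed.

Lemma connect_open_edgeE v w :
  connect (open_edge c) v w = (cluster_root c v == cluster_root c w).
Proof.
apply/idP/eqP => [/connectP[pth]|vw].
  elim: pth v => [|u pth IH] v /=; first by move=> _ ->.
  by case/andP=> /open_edge_cluster_root -> /IH.
apply: connect_trans (connect_cluster_root v) _.
by rewrite vw open_edge_connect_sym; apply: connect_cluster_root.
Qed.

Lemma root_cluster_sizeE (R : realFieldType) :
  root_cluster_size R c = \sum_w (val (cluster_root c w) == 0%N)%:R.
Proof.
rewrite /root_cluster_size -sum1_card natr_sum big_mkcond; apply: eq_bigr => w _.
rewrite inE; case: existsP => [[v /andP[/eqP v0]]|no_root].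
  by rewrite connect_open_edgeE cluster_root0 // => /eqP <-; rewrite v0.
case: eqP => // w0; case: no_root; exists (cluster_root c w).
by rewrite w0 eqxx open_edge_connect_sym connect_cluster_root.
Qed.

Lemma sum_sq_clustersE (R : realFieldType) :
  sum_sq_clusters R c = \sum_v \sum_w (cluster_root c v == cluster_root c w)%:R.
Proof.
rewrite /sum_sq_clusters sum_sq_connect_classes; last exact: open_edge_connect_sym.
by under eq_bigr do under eq_bigr do rewrite connect_open_edgeE.
Qed.

End ClusterRoot.

Definition rrt_factor (R : realFieldType) (alpha : R) (n : nat)
    (i a : 'I_n) (b : bool) : R :=
  if val i == 0%N then (if (a == i) && ~~ b then 1 else 0)
  else (if (val a < val i)%N then (val i)%:R^-1 else 0)
       * (if b then alpha else 1 - alpha).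

Section Percolation.
Variables (R : realFieldType) (alpha : R) (n : nat).
Implicit Types (c : rrt_conf n) (F G : rrt_conf n -> R).

Lemma rrt_weightE c : rrt_weight alpha c = \prod_i rrt_factor alpha i (c.1 i) (c.2 i).
Proof. by []. Qed.

Lemma sum_rrt_conf_prod (F : 'I_n -> 'I_n -> bool -> R) :
  \sum_(c : rrt_conf n) \prod_i F i (c.1 i) (c.2 i) = \prod_i \sum_a \sum_b F i a b.
Proof.
transitivity (\sum_(a : {ffun 'I_n -> 'I_n}) \sum_(b : {ffun 'I_n -> bool})
                \prod_i F i (a i) (b i)).
  by rewrite pair_big; apply: eq_bigr => -[].
by rewrite bigA_distr_bigA; apply: eq_bigr => a _; rewrite bigA_distr_bigA.
Qed.

Lemma sum_rrt_factor (i : 'I_n) : \sum_a \sum_b rrt_factor alpha i a b = 1.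
Proof.
rewrite /rrt_factor; case: eqP => [_|/eqP i_gt0].
  rewrite (bigD1 i) //= big_bool eqxx /= add0r big1 ?addr0 // => a /negbTE ->.
  by rewrite big_bool /= addr0.
under eq_bigr do rewrite big_bool /= -mulrDr subrKC mulr1.
rewrite -big_mkcond -(big_ord_widen n (fun _ => (val i)%:R^-1) (ltnW (ltn_ord i))).
by rewrite sumr_const card_ord -[LHS]mulr_natr mulVf // pnatr_eq0.
Qed.

Lemma rrt_weight_neq0_descending c : rrt_weight alpha c != 0 -> descending c.
Proof.
rewrite rrt_weightE => /prodf_neq0 nz k retained; move: (nz k isT).
rewrite /rrt_factor retained andbF; case: (val k =P 0%N) => _; first by rewrite eqxx.
by case: ltnP => //; rewrite mul0r eqxx.
Qed.

Lemma perc_E_ext F G :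
  (forall c, descending c -> F c = G c) -> perc_E alpha F = perc_E alpha G.
Proof.
move=> FG; apply: eq_bigr => c _.
have [->|nz] := eqVneq (rrt_weight alpha c) 0; first by rewrite !mul0r.
by rewrite FG //; apply: rrt_weight_neq0_descending.
Qed.

Lemma perc_E_cst a : perc_E alpha (fun _ : rrt_conf n => a) = a.
Proof.
rewrite /perc_E -mulr_suml; under eq_bigr do rewrite rrt_weightE.
by rewrite sum_rrt_conf_prod big1 ?mul1r // => i _; apply: sum_rrt_factor.
Qed.

Lemma perc_E_add F G :
  perc_E alpha (fun c => F c + G c) = perc_E alpha F + perc_E alpha G.
Proof. by rewrite /perc_E -big_split; apply: eq_bigr => c _; rewrite mulrDr. Qed.

Lemma perc_E_scale a F : perc_E alpha (fun c => a * F c) = a * perc_E alpha F.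
Proof. by rewrite /perc_E mulr_sumr; apply: eq_bigr => c _; rewrite mulrCA. Qed.

End Percolation.

Definition mrw_factor (R : realFieldType) (p q s : R) (n : nat)
    (x : {ffun 'I_n -> bool}) (k : 'I_n) : R :=
  if val k == 0%N then (if x k then s else 1 - s)
  else (val k)%:R^-1 * \sum_(u : 'I_n | (val u < val k)%N) mrw_trans p q (x u) (x k).

Definition fresh_prob (R : realFieldType) (s rho : R) (n : nat) (r : 'I_n) : R :=
  if val r == 0%N then s else rho.

Lemma fresh_probE (R : realFieldType) (s rho : R) n (v : 'I_n) :
  fresh_prob s rho v = rho + (s - rho) * (val v == 0%N)%:R.
Proof. by rewrite /fresh_prob; case: eqP => _ /=; ring. Qed.

Lemma fresh_prob_var (R : realFieldType) (s rho : R) n (v w : 'I_n) :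
  (v == w)%:R * (fresh_prob s rho v - fresh_prob s rho v ^+ 2)
  = rho * (1 - rho) * (v == w)%:R
    + (s - rho) * (1 - s - rho) * ((val v == 0%N)%:R * (val w == 0%N)%:R).
Proof.
rewrite /fresh_prob; case: eqVneq => [<-|vw]; first by case: eqP => _ /=; ring.
suff -> : (val v == 0%N)%:R * (val w == 0%N)%:R = 0 :> R by rewrite /=; ring.
case: eqP => v0; case: eqP => w0; rewrite /= ?mul0r ?mulr0 //.
by case/eqP: vw; apply: val_inj; rewrite v0 w0.
Qed.

Definition coupled_walk (n : nat) (c : rrt_conf n) (z : {ffun 'I_n -> bool}) :
    {ffun 'I_n -> bool} :=
  [ffun i => z (cluster_root c i)].

Lemma coupled_walkP (n : nat) (c : rrt_conf n) (z x : {ffun 'I_n -> bool}) :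
  descending c ->
  (coupled_walk c z == x) = [forall k, (if c.2 k then x (c.1 k) else z k) == x k].
Proof.
move=> c_desc; apply/eqP/forallP => [<- k|local].
  by rewrite !ffunE [cluster_root c k]cluster_root_step //; case: (c.2 k).
apply/ffunP => k; rewrite ffunE.
have [m lt_km] := ubnP k; elim: m k lt_km => // m IH k lt_km.
rewrite cluster_root_step //; have /eqP <- := local k.
case retained: (c.2 k) => //; apply: IH.
by apply: leq_trans (c_desc _ retained) _; rewrite -ltnS.
Qed.

Section Coupling.
Variables (R : realFieldType) (p q s : R) (n : nat).
Hypothesis alpha_neq1 : p - q != 1.

Let alpha := p - q.
Let rho := q / (1 - alpha).
Local Notation P := (@fresh_prob R s rho n).

Lemma mrw_trans_mixture a b :
  mrw_trans p q a b = alpha * (a == b)%:R + (1 - alpha) * (if b then rho else 1 - rho).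
Proof.
have : 1 - alpha != 0 by rewrite subr_eq0 eq_sym.
by rewrite /mrw_trans /rho /alpha; case: a; case: b => /= ?; field.
Qed.

Section FixedWalk.
Variable x : {ffun 'I_n -> bool}.

(* Weight at vertex k of the parent a, the retention bit b and the fresh value zk,
   times the indicator that the walk at k takes the copied (b) or the fresh value. *)
Let coupling_factor (k a : 'I_n) (b zk : bool) : R :=
  rrt_factor alpha k a b * (if zk then P k else 1 - P k)
  * ((if b then x a else zk) == x k)%:R.

Lemma sum_coupling_factor k :
  \sum_a \sum_b \sum_zk coupling_factor k a b zk = mrw_factor p q s x k.
Proof.
rewrite /coupling_factor /rrt_factor /mrw_factor /P /fresh_prob.
case: (val k =P 0%N) => [k0|/eqP k_gt0].
  rewrite (bigD1 k) //= [X in _ + X]big1 => [|a /negbTE ->]; last first.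
    by rewrite !big_bool /= !mul0r !addr0.
  rewrite !big_bool /= eqxx.
  by case: (x k); rewrite /= !mul0r ?mul1r ?mulr1 ?mulr0 ?addr0 ?add0r.
rewrite [in RHS]big_mkcond [in RHS]mulr_sumr; apply: eq_bigr => a _ /=.
case: ltnP => _; last by rewrite !big_bool /= !mul0r !addr0 mulr0.
rewrite mrw_trans_mixture !big_bool /=.
by case: (x a); case: (x k); rewrite /= ?eqxx; ring.
Qed.

Lemma coupling_factor_prod (c : rrt_conf n) z :
  rrt_weight alpha c * bernoulli_weight P z * (coupled_walk c z == x)%:R
  = \prod_k coupling_factor k (c.1 k) (c.2 k) (z k).
Proof.
rewrite /coupling_factor !big_split /= -rrt_weightE.
have [->|/rrt_weight_neq0_descending c_desc] := eqVneq (rrt_weight alpha c) 0.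
  by rewrite !mul0r.
by rewrite prodr_natb coupled_walkP.
Qed.

Lemma mrw_weight_coupling :
  mrw_weight p q s x
  = \sum_(c : rrt_conf n) \sum_z
      rrt_weight alpha c * bernoulli_weight P z * (coupled_walk c z == x)%:R.
Proof.
transitivity (\prod_k \sum_a \sum_b \sum_zk coupling_factor k a b zk).
  by apply: eq_bigr => k _; rewrite sum_coupling_factor.
rewrite -sum_rrt_conf_prod; apply: eq_bigr => c _.
by rewrite bigA_distr_bigA; apply: eq_bigr => z _; rewrite coupling_factor_prod.
Qed.

End FixedWalk.

Lemma mrw_E_coupling (f : {ffun 'I_n -> bool} -> R) :
  mrw_E p q s f
  = perc_E alpha (fun c => \sum_z bernoulli_weight P z * f (coupled_walk c z)).
Proof.
rewrite /mrw_E /perc_E.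
under eq_bigr do rewrite mrw_weight_coupling mulr_suml.
rewrite exchange_big; apply: eq_bigr => c _ /=.
under eq_bigr do rewrite mulr_suml.
rewrite exchange_big mulr_sumr; apply: eq_bigr => z _ /=.
rewrite (bigD1 (coupled_walk c z)) //= eqxx mulr1 mulrA big1 ?addr0 // => x.
by rewrite eq_sym => /negbTE ->; rewrite mulr0 mul0r.
Qed.

End Coupling.

Section ConditionalMoments.
Variables (R : realFieldType) (s rho : R) (n : nat) (c : rrt_conf n).
Hypothesis c_desc : descending c.

Local Notation P := (@fresh_prob R s rho n).
Local Notation r := (cluster_root c).

Lemma H_coupled_walk z : H R (coupled_walk c z) = \sum_i (z (r i))%:R.
Proof. by apply: eq_bigr => i _; rewrite ffunE; case: (z _). Qed.

Lemma sum_fresh_prob_root :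
  \sum_i P (r i) = rho * n%:R + (s - rho) * root_cluster_size R c.
Proof.
under eq_bigr do rewrite fresh_probE.
rewrite big_split /= sumr_const card_ord mulr_natr -mulr_sumr.
by rewrite (root_cluster_sizeE c_desc).
Qed.

Lemma coupled_mean_H :
  \sum_z bernoulli_weight P z * H R (coupled_walk c z)
  = rho * n%:R + (s - rho) * root_cluster_size R c.
Proof.
rewrite -sum_fresh_prob_root; under eq_bigr do rewrite H_coupled_walk mulr_sumr.
by rewrite exchange_big; apply: eq_bigr => i _ /=; rewrite bernoulli_weight_mean.
Qed.

Lemma coupled_second_moment_H :
  \sum_z bernoulli_weight P z * H R (coupled_walk c z) ^+ 2
  = (rho * n%:R + (s - rho) * root_cluster_size R c) ^+ 2
    + rho * (1 - rho) * sum_sq_clusters R c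
    + (s - rho) * (1 - s - rho) * root_cluster_size R c ^+ 2.
Proof.
have sqr_sum (F : 'I_n -> R) : (\sum_i F i) ^+ 2 = \sum_i \sum_j F i * F j.
  by rewrite expr2 mulr_suml; under eq_bigr do rewrite mulr_sumr.
transitivity (\sum_i \sum_j
    (P (r i) * P (r j) + (r i == r j)%:R * (P (r i) - P (r i) ^+ 2))).
  under eq_bigr do rewrite H_coupled_walk sqr_sum mulr_sumr.
  rewrite exchange_big; apply: eq_bigr => i _ /=.
  under eq_bigr do rewrite mulr_sumr.
  by rewrite exchange_big; apply: eq_bigr => j _ /=; rewrite bernoulli_weight_mean_pair.
rewrite -sum_fresh_prob_root (sum_sq_clustersE c_desc) (root_cluster_sizeE c_desc).
rewrite !sqr_sum; under eq_bigr do under eq_bigr do rewrite fresh_prob_var addrA.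
under eq_bigr do rewrite !big_split -!mulr_sumr /=.
rewrite !big_split /= -!mulr_sumr; congr (_ + _ + _ * _).
  by apply: eq_bigr => i _; rewrite mulr_sumr.
by apply: eq_bigr => i _; rewrite mulr_sumr.
Qed.

End ConditionalMoments.

Theorem theoremA3 (R : realFieldType) (p q s : R) (n : nat)
  (hq : 0 <= q) (hqp : q < p) (hp : p < 1) (hs0 : 0 <= s) (hs1 : s <= 1)
  (hn : (0 < n)%N) :
  let alpha := p - q in
  let rho := q / (1 - alpha) in
  mrw_E p q s (fun x : {ffun 'I_n -> bool} => H R x)
    = rho * n%:R + (s - rho) * perc_E alpha (@root_cluster_size R n)
  /\
  mrw_V p q s (fun x : {ffun 'I_n -> bool} => H R x)
    = rho * (1 - rho) * perc_E alpha (@sum_sq_clusters R n)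
      + (1 - 2 * rho) * (s - rho) * perc_E alpha (fun c : rrt_conf n => root_cluster_size R c ^+ 2)
      - (s - rho) ^+ 2 * (perc_E alpha (@root_cluster_size R n)) ^+ 2.
Proof.
move=> alpha rho.
have alpha_neq1 : alpha != 1 by rewrite lt_eqF // /alpha; lra.
set K := @root_cluster_size R n; set S := @sum_sq_clusters R n.
have mean : mrw_E p q s (fun x : {ffun 'I_n -> bool} => H R x)
    = rho * n%:R + (s - rho) * perc_E alpha K.
  rewrite mrw_E_coupling //.
  rewrite (perc_E_ext _ (G := fun c => rho * n%:R + (s - rho) * K c)).
    by rewrite perc_E_add perc_E_cst perc_E_scale.
  exact: coupled_mean_H.
have second : mrw_E p q s (fun x : {ffun 'I_n -> bool} => H R x ^+ 2)
    = (rho * n%:R) ^+ 2 + 2 * rho * n%:R * (s - rho) * perc_E alpha K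
      + (1 - 2 * rho) * (s - rho) * perc_E alpha (fun c => K c ^+ 2)
      + rho * (1 - rho) * perc_E alpha S.
  rewrite mrw_E_coupling // (perc_E_ext _ (G := fun c =>
    (rho * n%:R) ^+ 2 + (2 * rho * n%:R * (s - rho) * K c
    + ((1 - 2 * rho) * (s - rho) * K c ^+ 2 + rho * (1 - rho) * S c)))).
    by rewrite !perc_E_add perc_E_cst !perc_E_scale !addrA.
  by move=> c c_desc; rewrite coupled_second_moment_H // /K /S /rho /alpha; ring.
by split=> //; rewrite /mrw_V second mean; ring.
Qed.
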